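(* Let $1\le p<\infty$, $X=\ell_p(\mathbb Z_+)$, and let $\mathbf u=(u_n)_{n\ge1}$, $\mathbf v=(v_n)_{n\ge1}$ be bounded sequences of non-zero scalars. Assume that either $\liminf_{n\to\infty}\left|\frac{u_1\cdots u_n}{v_1\cdots v_n}\right|=0$ or $\limsup_{n\to\infty}\left|\frac{u_1\cdots u_n}{v_1\cdots v_n}\right|=\infty$. Then whenever $m_{\mathbf u}$ is a $B_{\mathbf u}$-invariant and $m_{\mathbf v}$ a $B_{\mathbf v}$-invariant Borel probability measure on $X$ with $m_{\mathbf u}(\ker e_0^* )=0=m_{\mathbf v}(\ker e_0^* )$, the measures $m_{\mathbf u}$ and $m_{\mathbf v}$ are mutually singular.
   Context: $(e_n)_{n\ge0}$ is the canonical basis of $\ell_p(\mathbb Z_+)$ (over $\mathbb R$ or $\mathbb C$) and $e_0^*$ is the first coordinate functional. For a bounded sequence $\mathbf w$ of non-zero scalars, $B_{\mathbf w}$ is the weighted backward shift $B_{\mathbf w}e_0=0$, $B_{\mathbf w}e_n=w_ne_{n-1}$ ($n\ge1$). Invariance of $m$ under $T$ means $m(T^{-1}(A))=m(A)$ for all Borel $A$. *)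

From HB Require Import structures.
From mathcomp Require Import all_boot all_order all_algebra.
From mathcomp Require Import all_classical all_reals all_analysis.
From mathcomp.real_closed Require Import complex.
Set Implicit Arguments. Unset Strict Implicit. Unset Printing Implicit Defensive.
Import Order.TTheory GRing.Theory Num.Theory.
Local Open Scope classical_set_scope.
Local Open Scope ring_scope.

Record scalars (R : realType) := Scalars {
  sc_type :> fieldType;
  sc_abs : sc_type -> R;
  sc_abs0 : sc_abs 0 = 0 }.

Definition real_scalars (R : realType) : scalars R :=
  @Scalars R R (@Num.norm _ R) (@normr0 _ R).
Definition complex_scalars (R : realType) : scalars R :=
  @Scalars R R[i] (@Normc.normc R) (@Normc.normc0 R).
Definition scalars_of (R : realType) (cplx : bool) : scalars R :=
  if cplx then complex_scalars R else real_scalars R.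

Section lp_space.
Context {R : realType} (K : scalars R) (p : {posnum R}).
Local Open Scope ereal_scope.

Definition lp_mem (x : nat -> K) : Prop :=
  \sum_(k <oo) ((sc_abs (x k)) `^ p%:num)%:E < +oo.

Lemma lp_mem0 : lp_mem (fun _ => 0%R).
Proof.
rewrite /lp_mem sc_abs0 powR0 ?gt_eqF //.
by rewrite eseries0 // ltry.
Qed.

Definition lp := {x : nat -> K | lp_mem x}.
HB.instance Definition _ := gen_eqMixin lp.
HB.instance Definition _ := gen_choiceMixin lp.
HB.instance Definition _ := isPointed.Build lp (exist _ _ lp_mem0).

(* open sets of the norm topology of l_p : x has a ball around it inside A;
   the ball of radius e^(1/p) is { y | \sum_k |x_k - y_k|^p < e } *)
Definition lp_open (A : set lp) : Prop :=
  forall x, A x -> exists e : R, (0 < e)%R /\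
    forall y : lp,
      \sum_(k <oo) ((sc_abs (sval x k - sval y k)) `^ p%:num)%:E < e%:E -> A y.

End lp_space.

Notation lpB K p := (g_sigma_algebraType (@lp_open _ K p)).

(* weighted backward shift on sequences: (B_w x)_n = w_{n+1} x_{n+1}
   (w_0 is irrelevant; the weights are w_1, w_2, ...) *)
Definition bshift {R : realType} {K : scalars R} (w : nat -> K) (x : nat -> K)
  : nat -> K := fun n => (w n.+1 * x n.+1)%R.

Definition shift_invariant {R : realType} {K : scalars R} {p : {posnum R}}
  (w : nat -> K) (m : set (lpB K p) -> \bar R) : Prop :=
  forall A : set (lpB K p), measurable A ->
    m [set x | exists2 y, A y & sval y = bshift w (sval x)] = m A.

Definition prod_ratio {R : realType} {K : scalars R} (u v : nat -> K) (n : nat) : R :=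
  sc_abs ((\prod_(1 <= k < n.+1) u k) / (\prod_(1 <= k < n.+1) v k))%R.

From HB Require Import structures.
From mathcomp Require Import all_boot all_order all_algebra.
From mathcomp Require Import all_classical all_reals all_analysis.
From mathcomp.real_closed Require Import complex.
Import Order.TTheory GRing.Theory Num.Theory.
Local Open Scope classical_set_scope.
Local Open Scope ring_scope.

(* Write W_n = w_1 ... w_n.  Since (B_w^n x)_0 = W_n x_n, under a B_w-invariant
   measure m the scaled coordinate W_n x_n has the law of x_0.  If
   |U_n / V_n| < r / M, the set E = {|U_n x_n| < r} contains {|V_n x_n| < M}, so
   m_u(E) = m_u{|x_0| < r} and m_v(~E) <= m_v{|x_0| >= M}; both are small for
   small r and large M, the first because m_u(x_0 = 0) = 0.  Choosing such sets
   E_k with measures below 2^-(k+1), Borel-Cantelli makes limsup E_k a set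
   carrying m_v but not m_u.  The case limsup = oo exchanges u and v. *)

Section scalars_of_abs.
Variables (R : realType) (cplx : bool).
Local Notation K := (scalars_of R cplx).
Local Notation abs := (@sc_abs R K).

Lemma sc_abs_ge0 (x : K) : 0 <= abs x.
Proof. by case: cplx x => [[a b]|x]; [exact: sqrtr_ge0 | exact: normr_ge0]. Qed.

Lemma sc_absM (x y : K) : abs (x * y) = abs x * abs y.
Proof. by case: cplx x y => x y; [exact: Normc.normcM | exact: normrM]. Qed.

Lemma sc_absV (x : K) : abs x^-1 = (abs x)^-1.
Proof. by case: cplx x => x; [exact: Normc.normcV | exact: normfV]. Qed.

Lemma sc_absN (x : K) : abs (- x) = abs x.
Proof. by case: cplx x => x; [exact: (@normcN R x) | exact: (@normrN _ R x)]. Qed.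

Lemma ler_sc_absD (x y : K) : abs (x + y) <= abs x + abs y.
Proof. by case: cplx x y => x y; [exact: le_normcD | exact: ler_normD]. Qed.

Lemma sc_abs_eq0 (x : K) : (abs x == 0) = (x == 0).
Proof.
apply/eqP/eqP => [|->]; last exact: sc_abs0.
by case: cplx x => x /=; [exact: Normc.eq0_normc | move/normr0_eq0].
Qed.

End scalars_of_abs.

Lemma nneseriesS_le (R : realType) (f : nat -> \bar R) : (forall k, 0 <= f k)%E ->
  (\sum_(k <oo) f k.+1 <= \sum_(k <oo) f k)%E.
Proof.
move=> f0; under eq_eseriesr do rewrite -addn1.
by rewrite nneseries_addn // [leRHS]nneseries_recl // leeDr.
Qed.

Lemma nneseries_ge_term (R : realType) (f : nat -> \bar R) n : (forall k, 0 <= f k)%E ->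
  (f n <= \sum_(k <oo) f k)%E.
Proof.
by move=> f0; rewrite (@nneseriesD1 _ _ n) // leeDl // nneseries_ge0.
Qed.

Section coordinate_slabs.
Variables (R : realType) (cplx : bool) (p : {posnum R}).
Local Notation K := (scalars_of R cplx).
Local Notation abs := (@sc_abs R K).

Definition coord_slab (c : K) (n : nat) (d : R) : set (lpB K p) :=
  [set x | abs (c * sval x n) < d].

Lemma lp_coord_dist_lt (x y : lp K p) n {r : R} : 0 < r ->
  (\sum_(k <oo) ((abs (sval x k - sval y k)) `^ p%:num)%:E < (r `^ p%:num)%:E)%E ->
  abs (sval x n - sval y n) < r.
Proof.
move=> r_gt0; apply: contraTT; rewrite -!leNgt => r_le.
have term_le : ((abs (sval x n - sval y n) `^ p%:num)%:E <=
    \sum_(k <oo) (abs (sval x k - sval y k) `^ p%:num)%:E)%E.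
  by apply: nneseries_ge_term => k; rewrite lee_fin powR_ge0.
apply: le_trans term_le.
by rewrite lee_fin ge0_ler_powR // ?nnegrE ?sc_abs_ge0 ?ltW.
Qed.

Lemma lp_open_coord_slab c n d : lp_open (coord_slab c n d).
Proof.
move=> x /= x_in; set a := abs (c * sval x n) in x_in.
have c1_gt0 : 0 < abs c + 1 by rewrite ltr_wpDl ?sc_abs_ge0.
pose r := (d - a) / (abs c + 1).
have r_gt0 : 0 < r by rewrite divr_gt0 ?subr_gt0.
exists (r `^ p%:num); split=> [|y /(lp_coord_dist_lt x y n r_gt0) xy_lt]; first exact: powR_gt0.
rewrite /coord_slab /=.
have -> : c * sval y n = c * sval x n + - (c * (sval x n - sval y n)).
  by rewrite mulrBr opprB addrC subrK.
apply: le_lt_trans (ler_sc_absD _ _ _ _) _; rewrite sc_absN [abs (c * (_ - _))]sc_absM.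
have -> : d = a + (abs c + 1) * r by rewrite mulrC divfK ?gt_eqF // addrC subrK.
rewrite ltrD2l mulrDl mul1r (@le_lt_trans _ _ (abs c * r)) ?ltrDl //.
by rewrite ler_wpM2l ?sc_abs_ge0 ?ltW.
Qed.

Lemma measurable_coord_slab c n d : measurable (coord_slab c n d).
Proof. by apply: sub_sigma_algebra; exact: lp_open_coord_slab. Qed.

Lemma lp_mem_bshift {w : nat -> K} {M : R} :
  (forall n, (1 <= n)%N -> abs (w n) <= M) ->
  forall x : lp K p, lp_mem p (bshift w (sval x)).
Proof.
move=> w_le x; have M_ge0 : 0 <= M by apply: le_trans (w_le 1%N isT); exact: sc_abs_ge0.
have /[dup] x_lp := svalP x; rewrite /lp_mem; set S := (\sum_(k <oo) _)%E => S_lt.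
have S_fin : S \is a fin_num.
  by rewrite ge0_fin_numE // nneseries_ge0 // => k _ _; rewrite lee_fin powR_ge0.
apply: (@le_lt_trans _ _ ((M `^ p%:num)%:E * S)%E); last first.
  by rewrite -(fineK S_fin) -EFinM ltry.
apply: (@le_trans _ _
    (\sum_(k <oo) ((M `^ p%:num)%:E * (abs (sval x k.+1) `^ p%:num)%:E))%E).
  apply: lee_nneseries => [k _ _|k _]; first by rewrite lee_fin powR_ge0.
  rewrite -EFinM lee_fin /bshift sc_absM -powRM ?sc_abs_ge0 //.
  apply: ge0_ler_powR; rewrite ?nnegrE ?mulr_ge0 ?sc_abs_ge0 //.
  by rewrite ler_wpM2r ?sc_abs_ge0 ?w_le.
rewrite nneseriesZl => [|k _]; last by rewrite lee_fin powR_ge0.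
rewrite lee_wpmul2l ?lee_fin ?powR_ge0 //.
by apply: nneseriesS_le => k; rewrite lee_fin powR_ge0.
Qed.

Definition wprod (w : nat -> K) (n : nat) : K := \prod_(1 <= k < n.+1) w k.

Lemma wprod0 w : wprod w 0 = 1.
Proof. by rewrite /wprod big_geq. Qed.

Lemma wprodS w n : wprod w n.+1 = wprod w n * w n.+1.
Proof. by rewrite /wprod big_nat_recr. Qed.

Lemma wprod_neq0 w : (forall n, (1 <= n)%N -> w n != 0) -> forall n, wprod w n != 0.
Proof.
by move=> w_neq0; elim=> [|n IHn]; rewrite ?wprod0 ?oner_neq0 // wprodS mulf_neq0 ?w_neq0.
Qed.

Lemma shift_invariant_coord_slab (m : set (lpB K p) -> \bar R) (w : nat -> K) (M : R) :
  (forall n, (1 <= n)%N -> abs (w n) <= M) -> shift_invariant w m ->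
  forall n d, m (coord_slab (wprod w n) n d) = m (coord_slab 1 0 d).
Proof.
move=> w_le m_inv; elim=> [|n IHn] d; first by rewrite wprod0.
rewrite -IHn -[RHS](m_inv _ (measurable_coord_slab _ _ _)); congr (m _).
apply/seteqP; split=> x; rewrite /coord_slab /= wprodS -mulrA => x_in.
  by exists (exist _ (bshift w (sval x)) (lp_mem_bshift w_le x)).
by case: x_in => y y_in y_eq; rewrite y_eq in y_in.
Qed.

End coordinate_slabs.

Arguments measurable_coord_slab {R cplx p}.
Arguments wprod_neq0 {R cplx w}.
Arguments shift_invariant_coord_slab {R cplx p m w M}.

Lemma setC_lim_sup_set_sub {T : Type} (F : nat -> set T) :
  ~` lim_sup_set F `<=` lim_sup_set (fun k => ~` F k).
Proof.
rewrite /lim_sup_set setC_bigcap => x [N _ notFx] n _.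
exists (maxn n N); first by rewrite /= leq_maxl.
by move=> Fx; apply: notFx; exists (maxn n N); rewrite /= ?leq_maxr.
Qed.

Section mutual_singularity.
Context {d} {T : measurableType d} {R : realType}.
Local Open Scope ereal_scope.

Definition mutually_singular (m1 m2 : set T -> \bar R) : Prop :=
  exists A, [/\ measurable A, m1 A = 0 & m2 (~` A) = 0].

Definition approx_separated (m1 m2 : set T -> \bar R) : Prop :=
  forall e : R, (0 < e)%R ->
    exists E, [/\ measurable E, m1 E < e%:E & m2 (~` E) < e%:E].

Lemma mutually_singular_sym m1 m2 :
  mutually_singular m1 m2 -> mutually_singular m2 m1.
Proof.
by case=> A [mA m1A m2A]; exists (~` A); rewrite setCK; split=> //; exact: measurableC.
Qed.

Lemma measurable_lim_sup_set (F : nat -> set T) :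
  (forall k, measurable (F k)) -> measurable (lim_sup_set F).
Proof.
by move=> mF; apply: bigcapT_measurable => n; apply: bigcup_measurable => k _.
Qed.

Lemma approx_separated_mutually_singular (m1 m2 : {measure set T -> \bar R}) :
  approx_separated m1 m2 -> mutually_singular m1 m2.
Proof.
move=> sep; pose eps k : R := (1 / (2 ^ k.+1)%:R)%R.
have /choice[E E_sep] k : exists E, [/\ measurable E,
    m1 E < (eps k)%:E & m2 (~` E) < (eps k)%:E].
  by apply: sep; rewrite divr_gt0 // ltr0n expn_gt0.
have mE k : measurable (E k) by case: (E_sep k).
have mEC k : measurable (~` E k) by exact: measurableC.
have summable (m : {measure set T -> \bar R}) (F : nat -> set T) :
    (forall k, m (F k) < (eps k)%:E) -> \sum_(k <oo) m (F k) < +oo.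
  move=> mF_lt; apply: (le_lt_trans _ (ltry 1%R)).
  apply: (le_trans _ (epsilon_trick0 xpredT ler01)).
  by apply: lee_nneseries => k *; [exact: measure_ge0 | exact/ltW/mF_lt].
exists (lim_sup_set E); split; first exact: measurable_lim_sup_set.
  by apply: lim_sup_set_cvg0 => //; apply: summable => k; case: (E_sep k).
apply: (subset_measure0 _ _ (setC_lim_sup_set_sub E)).
- exact/measurableC/measurable_lim_sup_set.
- exact: measurable_lim_sup_set.
by apply: lim_sup_set_cvg0 => //; apply: summable => k; case: (E_sep k).
Qed.

End mutual_singularity.

Lemma probability_nonincreasing_lt d (T : measurableType d) (R : realType)
    (m : probability T R) (F : nat -> set T) :
  (forall k, measurable (F k)) -> nonincreasing_seq F ->
  m (\bigcap_k F k) = 0%E -> forall e : R, 0 < e -> exists k, (m (F k) < e%:E)%E.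
Proof.
move=> mF F_noninc m0 e e_gt0.
have : m \o F @ \oo --> 0%E.
  rewrite -m0; apply: nonincreasing_cvg_mu => //; last exact: bigcapT_measurable.
  by rewrite (le_lt_trans (probability_le1 _ (mF 0%N))) ?ltry.
move=> /(_ _ (open_ereal_lt' (_ : 0 < e%:E)%E)) mF_lt.
by have [|N _ /(_ N (leqnn N))] := mF_lt; [rewrite lte_fin | exists N].
Qed.

Section shift_invariant_separation.
Variables (R : realType) (cplx : bool) (p : {posnum R}).
Local Notation K := (scalars_of R cplx).
Local Notation abs := (@sc_abs R K).
Local Notation coord_slab := (@coord_slab R cplx p).
Local Notation wprod := (@wprod R cplx).

Lemma coord0_slab_small {m : probability (lpB K p) R} {e : R} :
  m [set x | sval x 0%N = 0] = 0%E -> 0 < e ->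
  exists2 r, 0 < r & (m (coord_slab 1 0 r) < e%:E)%E.
Proof.
move=> m0 e_gt0.
have [||k m_lt] := @probability_nonincreasing_lt _ _ _ m
  (fun k => coord_slab 1 0 k.+1%:R^-1) (fun k => measurable_coord_slab _ _ _) _ _ _ e_gt0.
- move=> i j ij; apply/subsetPset => x /= /lt_le_trans; apply.
  by rewrite lef_pV2 ?posrE // ler_nat.
- rewrite -m0; congr (m _); apply/seteqP; split=> x /=; last first.
    by move=> x0 k _; rewrite /coord_slab /= x0 mulr0 sc_abs0.
  move=> x_in; apply/eqP; rewrite -(@sc_abs_eq0 R cplx) eq_le sc_abs_ge0 andbT leNgt.
  apply/negP => /ltr_add_invr[k]; rewrite add0r.
  by have := x_in k I; rewrite /coord_slab /= mul1r => /lt_trans/[apply]; rewrite ltxx.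
- by exists k.+1%:R^-1.
Qed.

Lemma coord0_tail_small (m : probability (lpB K p) R) {e : R} :
  0 < e -> exists2 M, 0 < M & (m (~` coord_slab 1 0 M) < e%:E)%E.
Proof.
move=> e_gt0.
have [||k m_lt] := @probability_nonincreasing_lt _ _ _ m
  (fun k => ~` coord_slab 1 0 k.+1%:R)
  (fun k => measurableC (measurable_coord_slab _ _ _)) _ _ _ e_gt0.
- move=> i j ij; apply/subsetPset => x /= x_out x_in; apply: x_out.
  by apply: lt_le_trans x_in _; rewrite ler_nat.
- rewrite (_ : \bigcap_k _ = set0) ?measure0 //; apply/seteqP; split=> x //= x_out.
  have := archi_boundP (@sc_abs_ge0 R cplx (1 * sval x 0%N)).
  set k := Num.bound _ => x_lt; apply: (x_out k I).
  by rewrite /coord_slab /= (lt_le_trans x_lt) // ler_nat.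
- by exists k.+1%:R.
Qed.

Lemma shift_invariant_approx_separated (m1 m2 : probability (lpB K p) R)
    (w1 w2 : nat -> K) (M1 M2 : R) :
  (forall n, (1 <= n)%N -> abs (w1 n) <= M1) ->
  (forall n, (1 <= n)%N -> abs (w2 n) <= M2) ->
  (forall n, (1 <= n)%N -> w2 n != 0) ->
  shift_invariant w1 m1 -> shift_invariant w2 m2 ->
  m1 [set x | sval x 0%N = 0] = 0%E ->
  (forall e, 0 < e -> exists n, abs (wprod w1 n / wprod w2 n) < e) ->
  approx_separated m1 m2.
Proof.
move=> w1_le w2_le w2_neq0 m1_inv m2_inv m1_0 ratio_small e e_gt0.
have [r r_gt0 m1_slab] := coord0_slab_small m1_0 e_gt0.
have [M M_gt0 m2_tail] := coord0_tail_small m2 e_gt0.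
have [n ratio_lt] := ratio_small (r / M) (divr_gt0 r_gt0 M_gt0).
exists (coord_slab (wprod w1 n) n r); split; first exact: measurable_coord_slab.
  by rewrite (shift_invariant_coord_slab w1_le m1_inv).
have slab_sub : coord_slab (wprod w2 n) n M `<=` coord_slab (wprod w1 n) n r.
  move=> x; rewrite /coord_slab /= => x_lt.
  have -> : wprod w1 n * sval x n = wprod w1 n / wprod w2 n * (wprod w2 n * sval x n).
    by rewrite mulrA divfK ?wprod_neq0.
  by rewrite sc_absM -(divfK (lt0r_neq0 M_gt0) r) ltr_pM ?sc_abs_ge0.
apply: (le_lt_trans _ m2_tail).
apply: (@le_trans _ _ (m2 (~` coord_slab (wprod w2 n) n M))).
- rewrite le_measure ?inE //; last exact: subsetC.
  1,2: by apply: measurableC; exact: measurable_coord_slab.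
- rewrite !probability_setC ?(shift_invariant_coord_slab w2_le m2_inv) //.
  all: exact: measurable_coord_slab.
Qed.

End shift_invariant_separation.

Arguments shift_invariant_approx_separated {R cplx p m1 m2 w1 w2 M1 M2}.

Section limn_einf_esup.
Variable R : realType.
Local Open Scope ereal_scope.

Lemma limn_einf_lt (u : (\bar R)^nat) x : limn_einf u < x -> exists n, u n < x.
Proof.
apply: contraPP => /forallNP u_ge; apply/negP; rewrite -leNgt limn_einf_lim.
apply: lime_ge; first exact: is_cvg_einfs.
by apply: nearW => n; apply: le_ereal_inf_tmp => _ [k _ <-]; rewrite leNgt; exact/negP.
Qed.

Lemma limn_esup_gt (u : (\bar R)^nat) x : x < limn_esup u -> exists n, x < u n.
Proof.
apply: contraPP => /forallNP u_le; apply/negP; rewrite -leNgt limn_esup_lim.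
apply: lime_le; first exact: is_cvg_esups.
by apply: nearW => n; apply: ge_ereal_sup => _ [k _ <-]; rewrite leNgt; exact/negP.
Qed.

End limn_einf_esup.

Theorem proposition3p8 (R : realType) (cplx : bool) (p : {posnum R})
  (hp : 1 <= p%:num) (u v : nat -> scalars_of R cplx)
  (u_bd : exists M : R, forall n, (1 <= n)%N -> sc_abs (u n) <= M)
  (v_bd : exists M : R, forall n, (1 <= n)%N -> sc_abs (v n) <= M)
  (u_nz : forall n, (1 <= n)%N -> u n != 0)
  (v_nz : forall n, (1 <= n)%N -> v n != 0)
  (hratio : (limn_einf (fun n => (prod_ratio u v n)%:E) = 0)%E \/
            (limn_esup (fun n => (prod_ratio u v n)%:E) = +oo)%E)
  (mu : probability (lpB (scalars_of R cplx) p) R)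
  (mv : probability (lpB (scalars_of R cplx) p) R)
  (mu_inv : shift_invariant u mu) (mv_inv : shift_invariant v mv)
  (mu_ker : mu [set x | sval x 0%N = 0] = 0%E)
  (mv_ker : mv [set x | sval x 0%N = 0] = 0%E) :
  exists A : set (lpB (scalars_of R cplx) p),
    [/\ measurable A, mu A = 0%E & mv (~` A) = 0%E].
Proof.
have [[Mu u_le] [Mv v_le]] := (u_bd, v_bd).
set r := fun n => (prod_ratio u v n)%:E in hratio.
case: hratio => [liminf0 | limsupy].
  apply: approx_separated_mutually_singular.
  apply: (shift_invariant_approx_separated u_le v_le v_nz mu_inv mv_inv mu_ker) => e e_gt0.
  have [|n] := @limn_einf_lt _ r e%:E; first by rewrite liminf0 lte_fin.
  by rewrite lte_fin; exists n.
apply: mutually_singular_sym; apply: approx_separated_mutually_singular.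
apply: (shift_invariant_approx_separated v_le u_le u_nz mv_inv mu_inv mv_ker) => e e_gt0.
have [|n] := @limn_esup_gt _ r e^-1%:E; first by rewrite limsupy ltry.
rewrite lte_fin => ratio_gt; exists n.
have ratio_gt0 : 0 < prod_ratio u v n by rewrite (lt_trans _ ratio_gt) ?invr_gt0.
by rewrite -invf_div sc_absV -[e]invrK ltf_pV2 ?posrE ?invr_gt0.
Qed.
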